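(* Let $p\ge1$ and $s_1,\dots,s_p\in\mathbb{C}^\times$ with $|s_i|\le1$ for all $i$. Then the Newton series $\sum_{n\ge0}(-1)^n\mathtt{s}^{\mathrm{sh}}_{y_{s_1}\cdots y_{s_p}}(n)\binom{z}{n}$ converges absolutely for $\mathrm{Re}(z)>-1$. If moreover $s_1\ne1$, it converges for $\mathrm{Re}(z)>-2$.
   Context: $\mathtt{s}^{\mathrm{sh}}_{y_{s_1}\cdots y_{s_p}}(m)=\sum_{m=m_1\ge\cdots\ge m_p\ge0}\frac{s_1^{m_1-m_2}\cdots s_{p-1}^{m_{p-1}-m_p}s_p^{m_p+1}}{(m_1+1)\cdots(m_p+1)}$ for $m\in\mathbb{Z}_{\ge0}$; $\binom{z}{n}=\frac{z(z-1)\cdots(z-n+1)}{n!}$. *)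

From Stdlib Require Import Reals List Arith Factorial.
From Coquelicot Require Import Coquelicot.
Import ListNotations.
Open Scope C_scope.

Fixpoint Cpow (x : C) (n : nat) : C :=
  match n with O => 1 | S k => x * Cpow x k end.

Fixpoint Csum (f : nat -> C) (m : nat) : C :=
  match m with O => f O | S k => Csum f k + f (S k) end.

(* s^sh_{y_{s_1}...y_{s_p}}(m) = sum_{m=m_1>=...>=m_p>=0}
     s_1^{m_1-m_2} ... s_{p-1}^{m_{p-1}-m_p} s_p^{m_p+1} / ((m_1+1)...(m_p+1)),
   computed by recursion on the word (first letter s_1, summing over m_2=k). *)
Fixpoint ssh (s : list C) (m : nat) : C :=
  match s with
  | [] => 1
  | a :: rest =>
      match rest with
      | [] => Cpow a (S m) / RtoC (INR (S m))
      | _ :: _ => Csum (fun k => Cpow a (m - k) / RtoC (INR (S m)) * ssh rest k) m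
      end
  end.

Fixpoint falling (z : C) (n : nat) : C :=
  match n with O => 1 | S k => falling z k * (z - RtoC (INR k)) end.

Definition binomC (z : C) (n : nat) : C := falling z n / RtoC (INR (fact n)).

Definition newton_term (s : list C) (z : C) (n : nat) : C :=
  Cpow (RtoC (-1)) n * ssh s n * binomC z n.

From Pilot Require Import Defs.
From Stdlib Require Import Reals List Lra Lia Factorial.
From Coquelicot Require Import Coquelicot.
Import ListNotations.
Open Scope R_scope.

(* Up to sign, [binom(z, n)] is the product [prod_(k <= n) (1 - (z + 1) / k)], which is
   [O(n ^ (-b))] for every real [b < Re z + 1]; the comparison is with the real products
   [poch_ratio b n], of exact order [n ^ (-b)].  By induction on the word, [(n + 1) s^sh(n)]
   is [O(n ^ e)] for every [e > 0]: it is a convolution of powers of [s_1], bounded by [1],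
   with the sums of the tail word.  For [Re z > -1] this makes the terms [O(n ^ (-1 - b))] with
   [b > 0], hence absolutely summable.  For [Re z > -2] and [s_1 <> 1], the scaled sums satisfy
   [q (n + 1) = s_1 q n + g n] with a correction [g n] that is smaller by a factor [1 / n];
   Abel summation against this recurrence gains a factor [1 / n] and leaves a telescoping series
   whose terms tend to [0] plus two absolutely convergent series. *)

(** * Real Pochhammer ratios *)

(* [poch_ratio b n = (1 - b)_n / n!]. *)
Fixpoint poch_ratio (b : R) (n : nat) : R :=
  match n with O => 1 | S k => poch_ratio b k * (1 - b / INR (S k)) end.

Lemma INR_S_ge_1 n : 1 <= INR (S n).
Proof. rewrite S_INR. pose proof (pos_INR n). lra. Qed.

Lemma poch_factor_pos b n : b < 1 -> 0 < 1 - b / INR (S n).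
Proof.
  intros Hb. pose proof (INR_S_ge_1 n).
  assert (b / INR (S n) * INR (S n) = b) by (field; lra). nra.
Qed.

Lemma poch_factor_nonneg b n : b <= 1 -> 0 <= 1 - b / INR (S n).
Proof.
  intros Hb. pose proof (INR_S_ge_1 n).
  assert (b / INR (S n) * INR (S n) = b) by (field; lra). nra.
Qed.

Lemma poch_ratio_pos b n : b < 1 -> 0 < poch_ratio b n.
Proof.
  intros Hb. induction n as [|n IH]; cbn [poch_ratio]; [lra|].
  apply Rmult_lt_0_compat; auto using poch_factor_pos.
Qed.

Lemma poch_ratio_nonneg b n : b <= 1 -> 0 <= poch_ratio b n.
Proof.
  intros Hb. induction n as [|n IH]; cbn [poch_ratio]; [lra|].
  apply Rmult_le_pos; auto using poch_factor_nonneg.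
Qed.

Lemma poch_ratio_ge_1 b n : b <= 0 -> 1 <= poch_ratio b n.
Proof.
  intros Hb. induction n as [|n IH]; cbn [poch_ratio]; [lra|].
  pose proof (INR_S_ge_1 n).
  assert (b / INR (S n) * INR (S n) = b) by (field; lra). nra.
Qed.

Lemma poch_ratio_succ_le b n : b <= 0 -> poch_ratio b (S n) <= (1 - b) * poch_ratio b n.
Proof.
  intros Hb. cbn [poch_ratio]. pose proof (poch_ratio_ge_1 b n Hb).
  pose proof (INR_S_ge_1 n).
  assert (b / INR (S n) * INR (S n) = b) by (field; lra).
  assert (b <= b / INR (S n)) by nra. nra.
Qed.

Lemma poch_ratio_mul_le b1 b2 n : b1 < 1 -> b2 < 1 ->
  poch_ratio b1 n * poch_ratio b2 n <= poch_ratio (b1 + b2 - Rabs (b1 * b2)) n.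
Proof.
  intros H1 H2. induction n as [|n IH]; cbn [poch_ratio]; [lra|].
  pose proof (poch_factor_pos b1 n H1). pose proof (poch_factor_pos b2 n H2).
  pose proof (poch_ratio_pos b1 n H1). pose proof (poch_ratio_pos b2 n H2).
  assert (Hfac : (1 - b1 / INR (S n)) * (1 - b2 / INR (S n))
                 <= 1 - (b1 + b2 - Rabs (b1 * b2)) / INR (S n)).
  { pose proof (INR_S_ge_1 n). unfold Rdiv. set (y := / INR (S n)).
    assert (0 < y <= 1).
    { split; [apply Rinv_0_lt_compat; lra|].
      rewrite <- Rinv_1. apply Rinv_le_contravar; lra. }
    pose proof (Rle_abs (b1 * b2)). pose proof (Rabs_pos (b1 * b2)).
    assert (b1 * b2 * (y * y) <= Rabs (b1 * b2) * (y * y))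
      by (apply Rmult_le_compat_r; nra).
    assert (Rabs (b1 * b2) * (y * y) <= Rabs (b1 * b2) * y)
      by (apply Rmult_le_compat_l; nra).
    nra. }
  replace (poch_ratio b1 n * (1 - b1 / INR (S n)) * (poch_ratio b2 n * (1 - b2 / INR (S n))))
    with ((poch_ratio b1 n * poch_ratio b2 n) * ((1 - b1 / INR (S n)) * (1 - b2 / INR (S n))))
    by ring.
  apply Rmult_le_compat; try apply Rmult_le_pos; lra.
Qed.

Lemma poch_ratio_absorb b b1 : b < b1 < 1 ->
  exists e, 0 < e /\ forall n, poch_ratio b1 n * poch_ratio (- e) n <= poch_ratio b n.
Proof.
  intros Hb. pose proof (Rabs_pos b1).
  exists ((b1 - b) / (1 + Rabs b1)). split; [apply Rdiv_lt_0_compat; lra|].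
  intros n. replace b with (b1 + - ((b1 - b) / (1 + Rabs b1))
                            - Rabs (b1 * - ((b1 - b) / (1 + Rabs b1)))) at 2.
  - apply poch_ratio_mul_le; [lra|].
    assert (0 < (b1 - b) / (1 + Rabs b1)) by (apply Rdiv_lt_0_compat; lra). lra.
  - rewrite Rabs_mult, Rabs_Ropp, (Rabs_pos_eq ((b1 - b) / _))
      by (left; apply Rdiv_lt_0_compat; lra).
    field. lra.
Qed.

Lemma sum_poch_ratio_div b m : b <> 0 ->
  sum_f_R0 (fun k => poch_ratio b k / INR (S k)) m = (1 - poch_ratio b (S m)) / b.
Proof.
  intros Hb. induction m as [|m IH].
  - cbn. field. lra.
  - rewrite tech5, IH. remember (S m) as k. cbn [poch_ratio].
    pose proof (INR_S_ge_1 k). field. lra.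
Qed.

Lemma sum_poch_ratio_div2 b m : b <> -1 ->
  sum_f_R0 (fun k => poch_ratio b k / (INR (S k) * INR (S (S k)))) m
  = (1 - poch_ratio b (S m) / INR (S (S m))) / (1 + b).
Proof.
  intros Hb. induction m as [|m IH].
  - cbn. field. lra.
  - rewrite tech5, IH. remember (S m) as k. cbn [poch_ratio].
    pose proof (INR_S_ge_1 k). rewrite (S_INR (S k)). field. lra.
Qed.

Lemma sum_poch_ratio_div_le b m : b < 0 ->
  sum_f_R0 (fun k => poch_ratio b k / INR (S k)) m <= (1 - b) / - b * poch_ratio b m.
Proof.
  intros Hb. rewrite sum_poch_ratio_div by lra.
  pose proof (poch_ratio_succ_le b m ltac:(lra)). pose proof (poch_ratio_ge_1 b m ltac:(lra)).
  replace ((1 - poch_ratio b (S m)) / b) with ((poch_ratio b (S m) - 1) / - b) by (field; lra).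
  replace ((1 - b) / - b * poch_ratio b m) with ((1 - b) * poch_ratio b m / - b) by (field; lra).
  apply Rmult_le_compat_r; [left; apply Rinv_0_lt_compat|]; lra.
Qed.

Lemma ex_series_nonneg_bounded (a : nat -> R) M :
  (forall n, 0 <= a n) -> (forall N, sum_f_R0 a N <= M) -> ex_series a.
Proof.
  intros Ha HM.
  destruct (ex_finite_lim_seq_incr (sum_n a) M) as [l Hl].
  - intros n. rewrite !sum_n_Reals, tech5. pose proof (Ha (S n)). lra.
  - intros n. rewrite sum_n_Reals. apply HM.
  - exists l. exact Hl.
Qed.

Lemma ex_series_poch_ratio_div b : 0 < b <= 1 ->
  ex_series (fun n => poch_ratio b n / INR (S n)).
Proof.
  intros Hb. apply ex_series_nonneg_bounded with (1 / b).
  - intros n. pose proof (INR_S_ge_1 n).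
    apply Rdiv_le_0_compat; [apply poch_ratio_nonneg|]; lra.
  - intros N. rewrite sum_poch_ratio_div by lra.
    pose proof (poch_ratio_nonneg b (S N) ltac:(lra)).
    apply Rmult_le_compat_r; [left; apply Rinv_0_lt_compat|]; lra.
Qed.

Lemma ex_series_poch_ratio_div2 b : -1 < b < 1 ->
  ex_series (fun n => poch_ratio b n / (INR (S n) * INR (S (S n)))).
Proof.
  intros Hb. apply ex_series_nonneg_bounded with (1 / (1 + b)).
  - intros n. pose proof (INR_S_ge_1 n). pose proof (INR_S_ge_1 (S n)).
    apply Rdiv_le_0_compat; [apply poch_ratio_nonneg; lra | nra].
  - intros N. rewrite sum_poch_ratio_div2 by lra.
    pose proof (poch_ratio_pos b (S N) ltac:(lra)). pose proof (INR_S_ge_1 (S N)).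
    assert (0 <= poch_ratio b (S N) / INR (S (S N))) by (apply Rdiv_le_0_compat; lra).
    apply Rmult_le_compat_r; [left; apply Rinv_0_lt_compat|]; lra.
Qed.

Lemma ln_succ_le n : ln (INR n + 3) - ln (INR n + 2) <= / (INR n + 2).
Proof.
  pose proof (pos_INR n).
  assert (Hy : 0 < / (INR n + 2)) by (apply Rinv_0_lt_compat; lra).
  replace (INR n + 3) with ((INR n + 2) * (1 + / (INR n + 2))) by (field; lra).
  rewrite ln_mult by lra.
  pose proof (exp_ineq1 (/ (INR n + 2)) ltac:(lra)).
  assert (ln (1 + / (INR n + 2)) < / (INR n + 2)).
  { rewrite <- (ln_exp (/ (INR n + 2))) at 2. apply ln_increasing; lra. }
  lra.
Qed.

(* [poch_ratio b n / (n + 1)] is the product of the factors [1 - (1 + b) / (k + 1)],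
   [k = 1 .. n], while [ln] grows by at most [1 / (k + 1)] from [k] to [k + 1]. *)
Lemma poch_ratio_div_log_le b n : -1 < b < 1 ->
  poch_ratio b n / INR (S n) * (1 + (1 + b) * (ln (INR n + 2) - ln 2)) <= 1.
Proof.
  intros Hb. induction n as [|n IH].
  - cbn. rewrite Rplus_0_l. lra.
  - set (v := poch_ratio b n / INR (S n)) in IH.
    set (y := / (INR n + 2)). set (g := 1 + b).
    assert (Hv : 0 <= v).
    { pose proof (INR_S_ge_1 n). apply Rdiv_le_0_compat; [apply poch_ratio_nonneg|]; lra. }
    assert (Hy : 0 < y <= / 2).
    { pose proof (pos_INR n). unfold y. split; [apply Rinv_0_lt_compat; lra|].
      apply Rinv_le_contravar; lra. }
    assert (Hnext : poch_ratio b (S n) / INR (S (S n)) = v * (1 - g * y)).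
    { unfold v, g, y. cbn [poch_ratio]. pose proof (pos_INR n).
      rewrite !S_INR. field. lra. }
    assert (Hlog : ln (INR (S n) + 2) - ln 2 <= ln (INR n + 2) - ln 2 + y).
    { pose proof (ln_succ_le n). rewrite S_INR. unfold y.
      replace (INR n + 1 + 2) with (INR n + 3) by ring. lra. }
    assert (HA : 0 <= ln (INR n + 2) - ln 2).
    { pose proof (pos_INR n). assert (ln 2 <= ln (INR n + 2)) by (apply ln_le; lra). lra. }
    set (L := ln (INR n + 2) - ln 2) in *.
    assert (Hg : 0 < g < 2) by (unfold g; lra).
    rewrite Hnext.
    assert (0 <= 1 - g * y) by nra.
    apply Rle_trans with (v * (1 - g * y) * (1 + g * (L + y))).
    { apply Rmult_le_compat_l; [nra|]. nra. }
    apply Rle_trans with (v * (1 + g * L)); [|exact IH].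
    assert (0 <= g * L + g * y) by (apply Rplus_le_le_0_compat; apply Rmult_le_pos; lra).
    assert (0 <= g * y) by (apply Rmult_le_pos; lra).
    assert (0 <= v * (g * y * (g * L + g * y))) by (apply Rmult_le_pos; [|apply Rmult_le_pos]; lra).
    replace (v * (1 - g * y) * (1 + g * (L + y)))
      with (v * (1 + g * L) - v * (g * y * (g * L + g * y))) by ring.
    lra.
Qed.

Lemma poch_ratio_div_lim_0 b : -1 < b < 1 ->
  is_lim_seq (fun n => poch_ratio b n / INR (S n)) 0.
Proof.
  intros Hb. apply is_lim_seq_spec. intros eps. pose proof (cond_pos eps) as He.
  set (M := ln 2 + / (eps * (1 + b))).
  destruct (INR_unbounded (exp M)) as [N HN].
  exists N. intros n Hn.
  assert (HnN : INR N <= INR n) by (apply le_INR; lia).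
  assert (HL : M < ln (INR n + 2)).
  { pose proof (exp_pos M). rewrite <- (ln_exp M). apply ln_increasing; lra. }
  pose proof (poch_ratio_div_log_le b n Hb) as Hinv.
  set (v := poch_ratio b n / INR (S n)) in *.
  assert (Hv : 0 <= v).
  { pose proof (INR_S_ge_1 n). apply Rdiv_le_0_compat; [apply poch_ratio_nonneg|]; lra. }
  rewrite Rminus_0_r, Rabs_pos_eq by exact Hv.
  assert (Hbig : / eps < 1 + (1 + b) * (ln (INR n + 2) - ln 2)).
  { assert ((1 + b) * / (eps * (1 + b)) = / eps) by (field; lra).
    unfold M in HL. nra. }
  assert (eps * / eps = 1) by (field; lra).
  assert (0 < / eps) by (apply Rinv_0_lt_compat; lra).
  nra.
Qed.

(* [f n = O(n ^ e)] for every [e > 0]. *)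
Definition subpolynomial (f : nat -> R) : Prop :=
  forall e, 0 < e -> exists K, forall n, f n <= K * poch_ratio (- e) n.

Lemma subpolynomial_succ f : subpolynomial f -> subpolynomial (fun n => f (S n)).
Proof.
  intros Hf e He. destruct (Hf e He) as [K HK].
  exists (Rmax K 0 * (1 + e)). intros n.
  pose proof (poch_ratio_succ_le (- e) n ltac:(lra)).
  pose proof (poch_ratio_ge_1 (- e) (S n) ltac:(lra)).
  pose proof (Rmax_l K 0). pose proof (Rmax_r K 0).
  apply Rle_trans with (Rmax K 0 * poch_ratio (- e) (S n)).
  - apply Rle_trans with (K * poch_ratio (- e) (S n)); [apply HK|].
    apply Rmult_le_compat_r; lra.
  - rewrite Rmult_assoc. apply Rmult_le_compat_l; [lra|].
    replace (1 - - e) with (1 + e) in * by ring. lra.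
Qed.

(** * The binomial coefficients and the shuffle sums *)

Open Scope C_scope.

Lemma Cmod_INR n : Cmod (RtoC (INR n)) = INR n.
Proof. rewrite Cmod_R. apply Rabs_pos_eq, pos_INR. Qed.

Lemma RtoC_INR_S_neq_0 n : RtoC (INR (S n)) <> 0.
Proof.
  pose proof (INR_S_ge_1 n). intros E. apply (f_equal Re) in E.
  unfold Re, RtoC in E. cbn [fst] in E. lra.
Qed.

Lemma Cmod_Cpow_le_1 (a : C) k : (Cmod a <= 1)%R -> (Cmod (Defs.Cpow a k) <= 1)%R.
Proof.
  intros Ha. induction k as [|k IH]; cbn [Defs.Cpow]; [rewrite Cmod_1; lra|].
  rewrite Cmod_mult. pose proof (Cmod_ge_0 (Defs.Cpow a k)). pose proof (Cmod_ge_0 a). nra.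
Qed.

Lemma Csum_Cmod_le (f : nat -> C) n :
  (Cmod (Csum f n) <= sum_f_R0 (fun k => Cmod (f k)) n)%R.
Proof.
  induction n as [|n IH]; cbn; [lra|].
  eapply Rle_trans; [apply Cmod_triangle | lra].
Qed.

Lemma Csum_ext (f g : nat -> C) n :
  (forall k, (k <= n)%nat -> f k = g k) -> Csum f n = Csum g n.
Proof.
  induction n as [|n IH]; intros H; cbn; [apply H; lia|].
  rewrite IH by (intros; apply H; lia). rewrite H by lia. reflexivity.
Qed.

Lemma Csum_mult_l (c : C) (f : nat -> C) n : Csum (fun k => c * f k) n = c * Csum f n.
Proof. induction n as [|n IH]; cbn; [|rewrite IH]; ring. Qed.

Fixpoint Cpoch_ratio (w : C) (n : nat) : C :=
  match n with O => 1 | S k => Cpoch_ratio w k * (1 - w / RtoC (INR (S k))) end.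

Lemma Cpoch_ratio_binomC z n : Defs.Cpow (RtoC (-1)) n * binomC z n = Cpoch_ratio (z + 1) n.
Proof.
  induction n as [|n IH].
  - unfold binomC. cbn [Defs.Cpow falling fact INR Cpoch_ratio]. field.
  - cbn [Cpoch_ratio]. rewrite <- IH. unfold binomC. cbn [Defs.Cpow falling].
    change (fact (S n)) with (S n * fact n)%nat.
    rewrite mult_INR, RtoC_mult.
    pose proof (RtoC_INR_S_neq_0 n).
    assert (RtoC (INR (fact n)) <> 0)
      by (intros E; injection E as E; revert E; apply INR_fact_neq_0).
    rewrite (S_INR n), RtoC_plus in *.
    replace (RtoC (-1)) with (- (1)) by (unfold RtoC, Copp; cbn; f_equal; ring).
    field. auto.
Qed.

Lemma Cpoch_factor_le_eventually (w : C) b : (b < Re w)%R -> (b < 1)%R ->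
  exists N, forall n, (N <= n)%nat ->
    (Cmod (1 - w / RtoC (INR (S n))) <= 1 - b / INR (S n))%R.
Proof.
  intros Hw Hb. destruct w as [wr wi]. cbn in Hw.
  destruct (INR_unbounded ((wr ^ 2 + wi ^ 2 + 1) / (2 * (wr - b)))) as [N HN].
  exists N. intros n Hn.
  assert (HnN : (INR N <= INR n)%R) by (apply le_INR; exact Hn).
  pose proof (INR_S_ge_1 n) as Hx.
  set (y := (/ INR (S n))%R).
  assert (Hy : (0 < y <= 1)%R).
  { unfold y. split; [apply Rinv_0_lt_compat; lra|].
    rewrite <- Rinv_1. apply Rinv_le_contravar; lra. }
  (* [n] is large enough that the second-order term [y ^ 2 |w| ^ 2] is dominated. *)
  assert (Hsmall : (y * (wr ^ 2 + wi ^ 2 + 1) <= 2 * (wr - b))%R).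
  { assert (Hratio : (wr ^ 2 + wi ^ 2 + 1 <= INR (S n) * (2 * (wr - b)))%R).
    { assert (wr ^ 2 + wi ^ 2 + 1 = (wr ^ 2 + wi ^ 2 + 1) / (2 * (wr - b)) * (2 * (wr - b)))%R
        as E by (field; lra).
      rewrite E at 1. apply Rmult_le_compat_r; [lra|]. rewrite S_INR. lra. }
    unfold y. apply (Rmult_le_reg_l (INR (S n))); [lra|].
    rewrite <- Rmult_assoc, Rinv_r, Rmult_1_l by lra. exact Hratio. }
  assert (E : Cmod (1 - (wr, wi) / RtoC (INR (S n))) = sqrt ((1 - wr * y) ^ 2 + (wi * y) ^ 2)).
  { unfold Cmod, y. f_equal. cbn -[INR]. field. lra. }
  rewrite E. unfold Rdiv. fold y.
  assert (Hpos : (0 <= 1 - b * y)%R).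
  { assert (0 <= y * (1 - b))%R by (apply Rmult_le_pos; lra). nra. }
  rewrite <- (sqrt_pow2 (1 - b * y)) by exact Hpos.
  apply sqrt_le_1_alt. nra.
Qed.

Lemma eventually_nonincreasing_bounded (q : nat -> R) N :
  (forall n, (N <= n)%nat -> (q (S n) <= q n)%R) -> exists K, forall n, (q n <= K)%R.
Proof.
  revert q. induction N as [|N IH]; intros q Hq.
  - exists (q O). intros n. induction n as [|n IHn]; [lra|].
    pose proof (Hq n ltac:(lia)). lra.
  - destruct (IH (fun n => q (S n))) as [K HK].
    + intros n Hn. apply Hq. lia.
    + exists (Rmax K (q O)). intros [|n].
      * apply Rmax_r.
      * eapply Rle_trans; [apply HK | apply Rmax_l].
Qed.

Lemma Cpoch_ratio_bound (w : C) b : (b < Re w)%R -> (b < 1)%R ->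
  exists K, (0 <= K)%R /\ forall n, (Cmod (Cpoch_ratio w n) <= K * poch_ratio b n)%R.
Proof.
  intros Hw Hb. destruct (Cpoch_factor_le_eventually w b Hw Hb) as [N HN].
  destruct (eventually_nonincreasing_bounded
              (fun n => Cmod (Cpoch_ratio w n) / poch_ratio b n)%R N) as [K HK].
  { intros n Hn. cbn [Cpoch_ratio poch_ratio]. rewrite Cmod_mult.
    pose proof (HN n Hn). pose proof (poch_factor_pos b n Hb).
    pose proof (poch_ratio_pos b n Hb). pose proof (Cmod_ge_0 (Cpoch_ratio w n)).
    set (f := (1 - b / INR (S n))%R) in *. set (p := poch_ratio b n) in *.
    apply Rle_trans with (Cmod (Cpoch_ratio w n) * f / (p * f))%R.
    - apply Rmult_le_compat_r; [left; apply Rinv_0_lt_compat; nra|].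
      apply Rmult_le_compat_l; lra.
    - right. field. lra. }
  exists K. split.
  - pose proof (HK O) as H0. cbn in H0. rewrite Cmod_1 in H0. lra.
  - intros n. pose proof (HK n). pose proof (poch_ratio_pos b n Hb).
    replace (Cmod (Cpoch_ratio w n)) with (Cmod (Cpoch_ratio w n) / poch_ratio b n
                                           * poch_ratio b n)%R by (field; lra).
    apply Rmult_le_compat_r; lra.
Qed.

Definition ssh_scaled (s : list C) (n : nat) : C := RtoC (INR (S n)) * ssh s n.

Lemma Cmod_ssh_scaled s n : Cmod (ssh_scaled s n) = (INR (S n) * Cmod (ssh s n))%R.
Proof. unfold ssh_scaled. rewrite Cmod_mult, Cmod_INR. reflexivity. Qed.

Lemma ssh_scaled_single a n : ssh_scaled [a] n = Defs.Cpow a (S n).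
Proof. unfold ssh_scaled. cbn [ssh]. field. apply RtoC_INR_S_neq_0. Qed.

Lemma ssh_scaled_cons a b r n :
  ssh_scaled (a :: b :: r) n = Csum (fun k => Defs.Cpow a (n - k) * ssh (b :: r) k) n.
Proof.
  unfold ssh_scaled. cbn [ssh]. rewrite <- Csum_mult_l. apply Csum_ext.
  intros k _. field. apply RtoC_INR_S_neq_0.
Qed.

Lemma subpolynomial_ssh_scaled a r : (forall x, In x (a :: r) -> (Cmod x <= 1)%R) ->
  subpolynomial (fun n => Cmod (ssh_scaled (a :: r) n)).
Proof.
  revert a. induction r as [|b r IH]; intros a Hs e He.
  - exists 1%R. intros n. rewrite ssh_scaled_single.
    pose proof (Cmod_Cpow_le_1 a (S n) (Hs a (or_introl eq_refl))).
    pose proof (poch_ratio_ge_1 (- e) n ltac:(lra)). lra.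
  - destruct (IH b (fun x Hx => Hs x (or_intror Hx)) e He) as [K HK].
    assert (HK0 : (0 <= K)%R).
    { pose proof (HK O) as H0. cbn [poch_ratio] in H0.
      pose proof (Cmod_ge_0 (ssh_scaled (b :: r) 0)). lra. }
    exists (K * ((1 - - e) / - - e))%R. intros n. rewrite ssh_scaled_cons.
    eapply Rle_trans; [apply Csum_Cmod_le|].
    eapply Rle_trans.
    { apply sum_Rle with (Bn := fun k => (poch_ratio (- e) k / INR (S k) * K)%R).
      intros k _. rewrite Cmod_mult.
      pose proof (Cmod_Cpow_le_1 a (n - k) (Hs a (or_introl eq_refl))).
      pose proof (HK k) as Hk. rewrite Cmod_ssh_scaled in Hk.
      pose proof (Cmod_ge_0 (ssh (b :: r) k)). pose proof (INR_S_ge_1 k).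
      apply Rle_trans with (Cmod (ssh (b :: r) k)); [nra|].
      apply (Rmult_le_reg_l (INR (S k))); [lra|].
      replace (INR (S k) * (poch_ratio (- e) k / INR (S k) * K))%R
        with (K * poch_ratio (- e) k)%R by (field; lra).
      exact Hk. }
    rewrite <- scal_sum, Rmult_assoc. apply Rmult_le_compat_l; [exact HK0|].
    apply sum_poch_ratio_div_le. lra.
Qed.

Definition ssh_corr (s : list C) (n : nat) : C :=
  match s with _ :: ((_ :: _) as r) => ssh r (S n) | _ => 0 end.

Lemma ssh_scaled_succ a r n :
  ssh_scaled (a :: r) (S n) = a * ssh_scaled (a :: r) n + ssh_corr (a :: r) n.
Proof.
  destruct r as [|b r].
  - rewrite !ssh_scaled_single. cbn [ssh_corr Defs.Cpow]. ring.
  - rewrite !ssh_scaled_cons. cbn [ssh_corr Csum]. rewrite Nat.sub_diag, <- Csum_mult_l.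
    cbn [Defs.Cpow]. rewrite Cmult_1_l. f_equal. apply Csum_ext.
    intros k Hk. rewrite Nat.sub_succ_l by exact Hk. cbn [Defs.Cpow]. ring.
Qed.

Lemma subpolynomial_ssh_corr a r : (forall x, In x (a :: r) -> (Cmod x <= 1)%R) ->
  subpolynomial (fun n => INR (S (S n)) * Cmod (ssh_corr (a :: r) n))%R.
Proof.
  intros Hs e He. destruct r as [|b r].
  - exists 0%R. intros n. cbn [ssh_corr]. rewrite Cmod_0. lra.
  - pose proof (subpolynomial_ssh_scaled b r (fun x Hx => Hs x (or_intror Hx))) as Hsub.
    destruct (subpolynomial_succ _ Hsub e He) as [K HK].
    exists K. intros n. cbn [ssh_corr]. rewrite <- Cmod_ssh_scaled. apply HK.
Qed.

(** * Convergence of the Newton series *)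

Lemma Cpoch_ratio_mul_subpolynomial_le (w : C) b (f : nat -> R) :
  (b < Re w)%R -> (b < 1)%R -> (forall n, 0 <= f n)%R -> subpolynomial f ->
  exists K, forall n, (Cmod (Cpoch_ratio w n) * f n <= K * poch_ratio b n)%R.
Proof.
  intros Hw Hb Hf0 Hf.
  set (b1 := ((b + Rmin (Re w) 1) / 2)%R).
  assert (Hb1 : (b < b1 < Re w /\ b1 < 1)%R).
  { pose proof (Rmin_l (Re w) 1). pose proof (Rmin_r (Re w) 1).
    assert (b < Rmin (Re w) 1)%R by (apply Rmin_glb_lt; lra). unfold b1. lra. }
  destruct (Cpoch_ratio_bound w b1 ltac:(lra) ltac:(lra)) as [K2 [HK2 Hbound]].
  destruct (poch_ratio_absorb b b1 ltac:(lra)) as [e [He Habsorb]].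
  destruct (Hf e He) as [K1 HK1].
  assert (HK1pos : (0 <= K1)%R) by (pose proof (HK1 O); pose proof (Hf0 O); cbn in *; lra).
  exists (K2 * K1)%R. intros n.
  pose proof (Hbound n). pose proof (HK1 n). pose proof (Hf0 n). pose proof (Habsorb n).
  pose proof (Cmod_ge_0 (Cpoch_ratio w n)).
  apply Rle_trans with (K2 * poch_ratio b1 n * (K1 * poch_ratio (- e) n))%R.
  - apply Rmult_le_compat; lra.
  - replace (K2 * poch_ratio b1 n * (K1 * poch_ratio (- e) n))%R
      with (K2 * K1 * (poch_ratio b1 n * poch_ratio (- e) n))%R by ring.
    apply Rmult_le_compat_l; [apply Rmult_le_pos|]; lra.
Qed.

Lemma ex_series_Cpoch_ratio_mul_div (w : C) (f : nat -> R) :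
  (0 < Re w)%R -> (forall n, 0 <= f n)%R -> subpolynomial f ->
  ex_series (fun n => Cmod (Cpoch_ratio w n) * f n / INR (S n))%R.
Proof.
  intros Hw Hf0 Hf. set (b := (Rmin (Re w) 1 / 2)%R).
  assert (Hb : (0 < b <= / 2 /\ b < Re w)%R).
  { pose proof (Rmin_l (Re w) 1). pose proof (Rmin_r (Re w) 1).
    assert (0 < Rmin (Re w) 1)%R by (apply Rmin_glb_lt; lra). unfold b. lra. }
  destruct (Cpoch_ratio_mul_subpolynomial_le w b f ltac:(lra) ltac:(lra) Hf0 Hf) as [K HK].
  apply (@ex_series_le _ R_CompleteNormedModule)
    with (b := fun n => (K * (poch_ratio b n / INR (S n)))%R).
  - intros n. pose proof (INR_S_ge_1 n). pose proof (Cmod_ge_0 (Cpoch_ratio w n)).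
    pose proof (Hf0 n). change norm with Rabs.
    rewrite Rabs_pos_eq by (apply Rdiv_le_0_compat; [apply Rmult_le_pos|]; lra).
    unfold Rdiv. rewrite <- Rmult_assoc.
    apply Rmult_le_compat_r; [left; apply Rinv_0_lt_compat; lra | apply HK].
  - apply (ex_series_scal_l (V := R_NormedModule)), ex_series_poch_ratio_div. lra.
Qed.

Lemma ex_series_Cpoch_ratio_mul_div2 (w : C) (f : nat -> R) :
  (-1 < Re w)%R -> (forall n, 0 <= f n)%R -> subpolynomial f ->
  ex_series (fun n => Cmod (Cpoch_ratio w n) * f n / (INR (S n) * INR (S (S n))))%R.
Proof.
  intros Hw Hf0 Hf. set (b := ((-1 + Rmin (Re w) 0) / 2)%R).
  assert (Hb : (-1 < b < 0 /\ b < Re w)%R).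
  { pose proof (Rmin_l (Re w) 0). pose proof (Rmin_r (Re w) 0).
    assert (-1 < Rmin (Re w) 0)%R by (apply Rmin_glb_lt; lra). unfold b. lra. }
  destruct (Cpoch_ratio_mul_subpolynomial_le w b f ltac:(lra) ltac:(lra) Hf0 Hf) as [K HK].
  apply (@ex_series_le _ R_CompleteNormedModule)
    with (b := fun n => (K * (poch_ratio b n / (INR (S n) * INR (S (S n)))))%R).
  - intros n. pose proof (INR_S_ge_1 n). pose proof (INR_S_ge_1 (S n)).
    pose proof (Cmod_ge_0 (Cpoch_ratio w n)). pose proof (Hf0 n).
    assert (Hd : (0 < INR (S n) * INR (S (S n)))%R) by nra.
    change norm with Rabs.
    rewrite Rabs_pos_eq by (apply Rdiv_le_0_compat; [apply Rmult_le_pos|]; lra).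
    unfold Rdiv. rewrite <- Rmult_assoc.
    apply Rmult_le_compat_r; [left; apply Rinv_0_lt_compat; lra | apply HK].
  - apply (ex_series_scal_l (V := R_NormedModule)), ex_series_poch_ratio_div2. lra.
Qed.

Lemma is_lim_seq_Cpoch_ratio_mul_div (w : C) (f : nat -> R) :
  (-1 < Re w)%R -> (forall n, 0 <= f n)%R -> subpolynomial f ->
  is_lim_seq (fun n => Cmod (Cpoch_ratio w n) * f n / INR (S n))%R 0%R.
Proof.
  intros Hw Hf0 Hf. set (b := ((-1 + Rmin (Re w) 0) / 2)%R).
  assert (Hb : (-1 < b < 0 /\ b < Re w)%R).
  { pose proof (Rmin_l (Re w) 0). pose proof (Rmin_r (Re w) 0).
    assert (-1 < Rmin (Re w) 0)%R by (apply Rmin_glb_lt; lra). unfold b. lra. }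
  destruct (Cpoch_ratio_mul_subpolynomial_le w b f ltac:(lra) ltac:(lra) Hf0 Hf) as [K HK].
  apply is_lim_seq_le_le with (u := fun _ => 0%R)
    (w := fun n => (K * (poch_ratio b n / INR (S n)))%R).
  - intros n. pose proof (INR_S_ge_1 n). pose proof (Cmod_ge_0 (Cpoch_ratio w n)).
    pose proof (Hf0 n). split.
    + apply Rdiv_le_0_compat; [apply Rmult_le_pos|]; lra.
    + unfold Rdiv. rewrite <- Rmult_assoc.
      apply Rmult_le_compat_r; [left; apply Rinv_0_lt_compat; lra | apply HK].
  - apply is_lim_seq_const.
  - replace (Finite 0) with (Rbar_mult K 0) by (cbn; f_equal; ring).
    apply is_lim_seq_scal_l, poch_ratio_div_lim_0. lra.
Qed.

Lemma ex_series_telescope (u : nat -> C) :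
  is_lim_seq (fun n => Cmod (u n)) 0%R -> ex_series (fun n => u (S n) - u n).
Proof.
  intros Hlim. exists (- u O).
  assert (Hsum : forall N, sum_n (fun n => u (S n) - u n) N = u (S N) - u O).
  { induction N as [|N IH]; [rewrite sum_O; reflexivity|].
    rewrite sum_Sn, IH. unfold plus. cbn. ring. }
  apply filterlim_ext with (fun N => u (S N) - u O); [intros N; rewrite Hsum; reflexivity|].
  apply (proj2 (filterlim_locally_ball_norm (K := C_AbsRing) (U := C_NormedModule) _ _)).
  intros eps. apply is_lim_seq_spec in Hlim. destruct (Hlim eps) as [N HN].
  exists N. intros n Hn. unfold ball_norm.
  change (Rlt (Cmod (minus (u (S n) - u O) (- u O))) eps).
  replace (minus (u (S n) - u O) (- u O)) with (u (S n))
    by (unfold minus, plus, opp; cbn; ring).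
  pose proof (HN (S n) ltac:(lia)) as H. rewrite Rminus_0_r, Rabs_pos_eq in H
    by apply Cmod_ge_0.
  exact H.
Qed.

(* Abel summation against the recurrence [q (n + 1) = a q n + g n]: since [a <> 1], the
   series of [c n q n] is a telescoping series plus the two given series, up to [1 / (a - 1)]. *)
Lemma ex_series_abel (a : C) (c q g : nat -> C) :
  a <> 1 -> (forall n, q (S n) = a * q n + g n) ->
  is_lim_seq (fun n => Cmod (c n * q n)) 0%R ->
  ex_series (fun n => (c (S n) - c n) * q (S n)) ->
  ex_series (fun n => c n * g n) ->
  ex_series (fun n => c n * q n).
Proof.
  intros Ha Hrec Hlim Hdiff Hcorr.
  assert (Ha1 : a - 1 <> 0) by (intros E; apply Ha; rewrite <- (Cplus_0_l 1), <- E; ring).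
  assert (Hid : forall n, / (a - 1) * ((c (S n) * q (S n) - c n * q n)
                                      - ((c (S n) - c n) * q (S n) + c n * g n)) = c n * q n).
  { intros n. rewrite Hrec. field. exact Ha1. }
  apply (ex_series_ext _ _ Hid).
  apply (ex_series_scal (V := C_NormedModule)), (ex_series_minus (V := C_NormedModule)).
  - exact (ex_series_telescope (fun n => c n * q n) Hlim).
  - apply (ex_series_plus (V := C_NormedModule)); assumption.
Qed.

Lemma newton_term_eq s z n :
  newton_term s z n = Cpoch_ratio (z + 1) n * ssh_scaled s n / RtoC (INR (S n)).
Proof.
  unfold newton_term, ssh_scaled. rewrite <- Cpoch_ratio_binomC.
  field. apply RtoC_INR_S_neq_0.
Qed.

Lemma Cpoch_ratio_div_succ_sub w n :
  Cpoch_ratio w (S n) / RtoC (INR (S (S n))) - Cpoch_ratio w n / RtoC (INR (S n))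
  = - (w + 1) * Cpoch_ratio w n / (RtoC (INR (S n)) * RtoC (INR (S (S n)))).
Proof.
  cbn [Cpoch_ratio]. pose proof (RtoC_INR_S_neq_0 n). pose proof (RtoC_INR_S_neq_0 (S n)).
  rewrite (S_INR (S n)), RtoC_plus in *. field. auto.
Qed.

Lemma ex_series_Cmod_newton_term a r z :
  (forall x, In x (a :: r) -> (Cmod x <= 1)%R) -> (-1 < Re z)%R ->
  ex_series (fun n => Cmod (newton_term (a :: r) z n)).
Proof.
  intros Hs Hz.
  apply (ex_series_ext (V := R_NormedModule)
    (fun n => Cmod (Cpoch_ratio (z + 1) n) * Cmod (ssh_scaled (a :: r) n) / INR (S n))%R).
  { intros n. rewrite newton_term_eq, Cmod_div, Cmod_mult, Cmod_INR
      by apply RtoC_INR_S_neq_0. reflexivity. }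
  apply ex_series_Cpoch_ratio_mul_div.
  - rewrite re_plus. change (Re 1) with 1%R. lra.
  - intros n. apply Cmod_ge_0.
  - exact (subpolynomial_ssh_scaled a r Hs).
Qed.

Lemma ex_series_newton_term a r z :
  (forall x, In x (a :: r) -> (Cmod x <= 1)%R) -> a <> 1 -> (-2 < Re z)%R ->
  ex_series (newton_term (a :: r) z).
Proof.
  intros Hs Ha Hz.
  set (w := z + 1).
  assert (Hw : (-1 < Re w)%R) by (unfold w; rewrite re_plus; change (Re 1) with 1%R; lra).
  set (c := fun n => Cpoch_ratio w n / RtoC (INR (S n))).
  set (q := ssh_scaled (a :: r)).
  pose proof (subpolynomial_ssh_scaled a r Hs) as Hq.
  assert (Hnn : forall n, (0 <= Cmod (q n))%R) by (intros; apply Cmod_ge_0).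
  assert (Hterm : forall n, c n * q n = newton_term (a :: r) z n).
  { intros n. unfold c, q, w. rewrite newton_term_eq. field. apply RtoC_INR_S_neq_0. }
  apply (ex_series_ext _ _ Hterm).
  apply ex_series_abel with a (ssh_corr (a :: r)); [exact Ha | apply ssh_scaled_succ | | |].
  - apply is_lim_seq_ext with (fun n => Cmod (Cpoch_ratio w n) * Cmod (q n) / INR (S n))%R.
    { intros n. unfold c. rewrite Cmod_mult, Cmod_div, Cmod_INR by apply RtoC_INR_S_neq_0.
      unfold Rdiv. ring. }
    exact (is_lim_seq_Cpoch_ratio_mul_div w _ Hw Hnn Hq).
  - apply (@ex_series_le _ C_CompleteNormedModule) with
      (fun n => Cmod (w + 1) * (Cmod (Cpoch_ratio w n) * Cmod (q (S n))
                                / (INR (S n) * INR (S (S n)))))%R.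
    + intros n. right. unfold c. rewrite Cpoch_ratio_div_succ_sub.
      change norm with Cmod.
      rewrite Cmod_mult, Cmod_div, !Cmod_mult, Cmod_opp, !Cmod_INR.
      * unfold Rdiv. ring.
      * apply Cmult_neq_0; apply RtoC_INR_S_neq_0.
    + apply (ex_series_scal_l (V := R_NormedModule)), ex_series_Cpoch_ratio_mul_div2;
        [exact Hw | intros; apply Cmod_ge_0 | exact (subpolynomial_succ _ Hq)].
  - apply (@ex_series_le _ C_CompleteNormedModule) with
      (fun n => Cmod (Cpoch_ratio w n) * (INR (S (S n)) * Cmod (ssh_corr (a :: r) n))
                / (INR (S n) * INR (S (S n))))%R.
    + intros n. right. unfold c. change norm with Cmod.
      rewrite Cmod_mult, Cmod_div, Cmod_INR by apply RtoC_INR_S_neq_0.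
      pose proof (INR_S_ge_1 n). pose proof (INR_S_ge_1 (S n)). field. lra.
    + apply ex_series_Cpoch_ratio_mul_div2; [exact Hw | | exact (subpolynomial_ssh_corr a r Hs)].
      intros n. pose proof (pos_INR (S (S n))). pose proof (Cmod_ge_0 (ssh_corr (a :: r) n)).
      nra.
Qed.

Theorem proposition3p14 (s : list C) :
  (1 <= length s)%nat ->
  (forall x, In x s -> x <> 0 /\ (Cmod x <= 1)%R) ->
  (forall z : C, (-1 < Re z)%R ->
     ex_series (fun n => Cmod (newton_term s z n))) /\
  (nth 0 s 0 <> 1 ->
   forall z : C, (-2 < Re z)%R -> ex_series (newton_term s z)).
Proof.
  intros Hlen Hs.
  destruct s as [|a r]; [cbn in Hlen; lia|].
  assert (Hmod : forall x, In x (a :: r) -> (Cmod x <= 1)%R) by (intros x Hx; apply Hs, Hx).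
  split.
  - intros z Hz. exact (ex_series_Cmod_newton_term a r z Hmod Hz).
  - intros Ha z Hz. exact (ex_series_newton_term a r z Hmod Ha Hz).
Qed.
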